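(* Let $b=2$, $c>0$ and $k\in\left(0,\frac{c}{3}\right)$. Let $\phi=\phi_k\in C^\infty(\mathbb{R})$ be the solitary wave profile of $$u_t-u_{txx}+3uu_x=2u_xu_{xx}+uu_{xxx},$$ that is, the travelling wave $u(t,x)=\phi(x-ct)$ with $\phi'(0)=0$, $\phi(x)\to k$ as $|x|\to\infty$ and $0<\phi<c$. Then the mapping $$k\mapsto Q(\phi)=\int_{\mathbb{R}}\left[2\frac{c-k}{c-\phi}-\left(\frac{c-k}{c-\phi}\right)^2-1\right]dx$$ is strictly increasing on $\left(0,\frac{c}{3}\right)$. *)

From Stdlib Require Import Reals.
From Coquelicot Require Import Coquelicot.
Open Scope R_scope.

Definition smooth (f : R -> R) : Prop := forall (n : nat) (x : R), ex_derive_n f n x.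

(* Travelling-wave equation obtained by substituting u(t,x) = phi(x - c t) into
   u_t - u_txx + 3 u u_x = 2 u_x u_xx + u u_xxx   (b = 2):
   -c phi' + c phi''' + 3 phi phi' = 2 phi' phi'' + phi phi'''. *)
Definition tw_ode (c : R) (phi : R -> R) : Prop :=
  forall x : R,
    - c * Derive phi x + c * Derive_n phi 3 x + 3 * phi x * Derive phi x
    = 2 * Derive phi x * Derive_n phi 2 x + phi x * Derive_n phi 3 x.

Definition solitary_wave (c k : R) (phi : R -> R) : Prop :=
  smooth phi /\ tw_ode c phi /\ Derive phi 0 = 0 /\
  is_lim phi p_infty k /\ is_lim phi m_infty k /\
  (forall x, 0 < phi x < c) /\
  (exists x, phi x <> k).

Definition Q_integrand (c k : R) (phi : R -> R) (x : R) : R :=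
  2 * ((c - k) / (c - phi x)) - ((c - k) / (c - phi x)) ^ 2 - 1.

(* The travelling-wave equation has two first integrals; letting x tend to infinity fixes
   their constants and leaves the energy identity (c - phi) phi'^2 = (phi - k)^2 (c - 2k - phi).
   It gives |phi'| <= |phi - k|, so phi never takes the value k and w = phi'/(phi - k) is smooth,
   with w^2 = (c - 2k - phi)/(c - phi) and w' = -k (phi - k)/(c - phi)^2.  In terms of w the
   integrand of Q is the derivative of G(w), G(t) = (c - k)/k t - ln(1 + t) + ln(1 - t), and w
   tends to -r at +oo and to r at -oo, where r = sqrt((c - 3k)/(c - k)) is the decay rate of
   phi - k.  Hence Q(phi_k) = G(-r) - G(r) = 2 (ln((1 + r)/(1 - r)) - 2r/(1 - r^2)), which is
   decreasing in r on (0, 1), while r is decreasing in k. *)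

From Stdlib Require Import Reals Lra.
From Coquelicot Require Import Coquelicot.
Open Scope R_scope.

Lemma is_derive_MVT (f f' : R -> R) (a b : R) :
  a < b -> (forall x, is_derive f x (f' x)) ->
  exists z, a < z < b /\ f b - f a = f' z * (b - a).
Proof.
  intros Hab Df.
  destruct (MVT_cor2 f f' a b Hab) as [z [E Hz]].
  - intros z _. apply is_derive_Reals, Df.
  - exists z. split; assumption.
Qed.

Lemma is_derive_nonneg_le (f f' : R -> R) (a b : R) :
  (forall x, is_derive f x (f' x)) -> (forall x, a <= x <= b -> 0 <= f' x) ->
  a <= b -> f a <= f b.
Proof.
  intros Df Hpos Hab.
  destruct (Req_dec a b) as [<- | Hne]; [lra |].
  destruct (is_derive_MVT f f' a b ltac:(lra) Df) as [z [Hz E]].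
  pose proof (Hpos z ltac:(lra)). nra.
Qed.

Lemma is_derive_0_const (f : R -> R) :
  (forall x, is_derive f x 0) -> forall x y, f x = f y.
Proof.
  intros Df x y.
  destruct (Rtotal_order x y) as [Hxy | [<- | Hxy]]; [| reflexivity | symmetry];
    apply eq_is_derive; auto.
Qed.

Lemma is_derive_sqr (g g' : R -> R) (x : R) :
  is_derive g x (g' x) -> is_derive (fun y => g y ^ 2) x (2 * g x * g' x).
Proof.
  intros Dg.
  replace (2 * g x * g' x) with (INR 2 * g' x * g x ^ Nat.pred 2) by (simpl; ring).
  apply is_derive_pow, Dg.
Qed.

(* Gronwall's lemma for |g'| <= |g|: g^2 e^(-2x) decreases and g^2 e^(2x) increases. *)
Lemma dominated_derive_eq0 (g g' : R -> R) (x0 : R) :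
  (forall x, is_derive g x (g' x)) -> (forall x, g' x ^ 2 <= g x ^ 2) ->
  g x0 = 0 -> forall x, g x = 0.
Proof.
  intros Dg Hdom Hx0 x.
  assert (Hgg : forall y, - g y ^ 2 <= g y * g' y <= g y ^ 2).
  { intros y. pose proof (Hdom y).
    pose proof (pow2_ge_0 (g y - g' y)). pose proof (pow2_ge_0 (g y + g' y)). nra. }
  assert (Dsq : forall (m s : R) y,
    is_derive (fun y => m * (g y ^ 2 * exp (s * y))) y
      (m * ((2 * g y * g' y + s * g y ^ 2) * exp (s * y)))).
  { intros m s y. auto_derive.
    - eexists; apply Dg.
    - erewrite is_derive_unique by apply Dg. ring. }
  assert (Hsq : g x ^ 2 * exp (2 * x) <= 0 \/ g x ^ 2 * exp (-2 * x) <= 0).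
  { destruct (Rle_lt_dec x0 x) as [Hx | Hx]; [right | left].
    - assert (Hle : -1 * (g x0 ^ 2 * exp (-2 * x0)) <= -1 * (g x ^ 2 * exp (-2 * x))).
      { apply (is_derive_nonneg_le (fun y => -1 * (g y ^ 2 * exp (-2 * y)))
          (fun y => -1 * ((2 * g y * g' y + -2 * g y ^ 2) * exp (-2 * y))));
          [apply Dsq | | exact Hx].
        intros y _. pose proof (Hgg y). pose proof (exp_pos (-2 * y)). nra. }
      rewrite Hx0 in Hle. lra.
    - assert (Hle : 1 * (g x ^ 2 * exp (2 * x)) <= 1 * (g x0 ^ 2 * exp (2 * x0))).
      { apply (is_derive_nonneg_le (fun y => 1 * (g y ^ 2 * exp (2 * y)))
          (fun y => 1 * ((2 * g y * g' y + 2 * g y ^ 2) * exp (2 * y)))); [apply Dsq | | lra].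
        intros y _. pose proof (Hgg y). pose proof (exp_pos (2 * y)). nra. }
      rewrite Hx0 in Hle. lra. }
  pose proof (exp_pos (2 * x)). pose proof (exp_pos (-2 * x)).
  assert (g x ^ 2 = 0) by (pose proof (pow2_ge_0 (g x)); destruct Hsq; nra).
  nra.
Qed.

Lemma filterlim_abs_lt {F : (R -> Prop) -> Prop} {FF : Filter F} (f : R -> R) (a eps : R) :
  filterlim f F (locally a) -> 0 < eps -> F (fun x => Rabs (f x - a) < eps).
Proof. intros Hf He. exact (proj1 (filterlim_locally f a) Hf (mkposreal eps He)). Qed.

Lemma filterlim_sqr_0 {F : (R -> Prop) -> Prop} {FF : Filter F} (f : R -> R) :
  filterlim (fun x => f x ^ 2) F (locally 0) -> filterlim f F (locally 0).
Proof.
  intros Hf. apply filterlim_locally. intros eps.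
  pose proof (cond_pos eps) as He.
  eapply filter_imp; [| apply (filterlim_abs_lt (fun x => f x ^ 2) 0 (eps * eps) Hf); nra].
  intros x Hx. change (Rabs (f x ^ 2 - 0) < eps * eps) in Hx. change (Rabs (f x - 0) < eps).
  rewrite Rminus_0_r in *. rewrite <- pow2_abs in Hx.
  rewrite Rabs_right in Hx by (apply Rle_ge, pow2_ge_0).
  pose proof (Rabs_pos (f x)). nra.
Qed.

Lemma derive_sqr_lim_pinfty_eq0 (f f' : R -> R) (a L : R) :
  (forall x, is_derive f x (f' x)) ->
  filterlim f (Rbar_locally p_infty) (locally a) ->
  filterlim (fun x => f' x ^ 2) (Rbar_locally p_infty) (locally L) -> L = 0.
Proof.
  intros Df Hf Hf'.
  destruct (Rtotal_order L 0) as [HL | [HL | HL]]; [exfalso | exact HL | exfalso].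
  - destruct (filterlim_abs_lt (fun x => f' x ^ 2) L (- L) Hf' ltac:(lra)) as [M HM].
    specialize (HM (M + 1) ltac:(lra)). pose proof (pow2_ge_0 (f' (M + 1))).
    apply Rabs_def2 in HM. lra.
  - set (d := Rmin 1 (L / 8)).
    assert (Hd : 0 < d) by (apply Rmin_glb_lt; lra).
    assert (d <= 1) by apply Rmin_l. assert (d <= L / 8) by apply Rmin_r.
    pose proof (filterlim_abs_lt (fun x => f' x ^ 2) L (L / 2) Hf' ltac:(lra)) as Hnear.
    destruct (filter_and _ _ Hnear (filterlim_abs_lt f a d Hf Hd)) as [M HM].
    destruct (is_derive_MVT f f' (M + 1) (M + 2) ltac:(lra) Df) as [z [Hz E]].
    destruct (HM z ltac:(lra)) as [Hz' _].
    destruct (HM (M + 1) ltac:(lra)) as [_ H1]. destruct (HM (M + 2) ltac:(lra)) as [_ H2].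
    apply Rabs_def2 in Hz'. apply Rabs_def2 in H1. apply Rabs_def2 in H2.
    replace (M + 2 - (M + 1)) with 1 in E by ring.
    assert (Hf'z : - (2 * d) < f' z < 2 * d) by lra.
    nra.
Qed.

Lemma continuity_pos_of_neq0 (f : R -> R) (a b : R) :
  (forall x, continuous f x) -> a <= b -> (forall x, a <= x <= b -> f x <> 0) ->
  0 < f a -> 0 < f b.
Proof.
  intros Cf Hab Hnz Ha.
  destruct (Rlt_or_le 0 (f b)) as [Hb | Hb]; [exact Hb | exfalso].
  destruct (IVT_gen f a b 0) as [z [Hz Ez]].
  - intros x. apply continuity_pt_filterlim, Cf.
  - rewrite Rmin_right, Rmax_left; lra.
  - rewrite Rmin_left, Rmax_right in Hz by lra. exact (Hnz z Hz Ez).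
Qed.

Definition logderiv (g g' : R -> R) (x : R) : R := g' x / g x.

(* If w = g'/g were positive near infinity, g^2 would be nondecreasing there. *)
Lemma logderiv_eventually_neg (g g' : R -> R) :
  (forall x, is_derive g x (g' x)) -> (forall x, g x <> 0) ->
  (forall x, continuous (logderiv g g') x) ->
  filterlim g (Rbar_locally p_infty) (locally 0) ->
  Rbar_locally p_infty (fun x => g' x <> 0) ->
  Rbar_locally p_infty (fun x => logderiv g g' x < 0).
Proof.
  intros Dg Gnz Cw Lg [X HX]. exists X. intros x1 Hx1.
  assert (Wnz : forall x, X < x -> logderiv g g' x <> 0).
  { intros x Hx. unfold logderiv.
    apply Rmult_integral_contrapositive_currified; [apply HX, Hx | apply Rinv_neq_0_compat, Gnz]. }
  destruct (Rlt_or_le (logderiv g g' x1) 0) as [Hneg | Hpos]; [exact Hneg | exfalso].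
  assert (Wpos : forall y, x1 <= y -> 0 < logderiv g g' y).
  { intros y Hy. apply (continuity_pos_of_neq0 _ x1 y Cw Hy).
    - intros x Hx. apply Wnz. lra.
    - pose proof (Wnz x1 Hx1). lra. }
  assert (Grow : forall y, x1 <= y -> g x1 ^ 2 <= g y ^ 2).
  { intros y Hy. apply (is_derive_nonneg_le (fun x => g x ^ 2) (fun x => 2 * g x * g' x)).
    - intros x. apply is_derive_sqr, Dg.
    - intros x Hx. pose proof (Wpos x ltac:(lra)) as Hw. unfold logderiv in Hw.
      replace (2 * g x * g' x) with (2 * (g' x / g x) * g x ^ 2) by (field; apply Gnz).
      pose proof (pow2_ge_0 (g x)). nra.
    - exact Hy. }
  pose proof (Rabs_pos_lt _ (Gnz x1)) as Hg1.
  destruct (filterlim_abs_lt g 0 _ Lg Hg1) as [M HM].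
  set (y := Rmax M x1 + 1).
  specialize (HM y ltac:(unfold y; pose proof (Rmax_l M x1); lra)).
  specialize (Grow y ltac:(unfold y; pose proof (Rmax_r M x1); lra)).
  rewrite Rminus_0_r in HM. rewrite <- (pow2_abs (g x1)), <- (pow2_abs (g y)) in Grow.
  pose proof (Rabs_pos (g y)). nra.
Qed.

Lemma logderiv_eventually_pos_minfty (g g' : R -> R) :
  (forall x, is_derive g x (g' x)) -> (forall x, g x <> 0) ->
  (forall x, continuous (logderiv g g') x) ->
  filterlim g (Rbar_locally m_infty) (locally 0) ->
  Rbar_locally m_infty (fun x => g' x <> 0) ->
  Rbar_locally m_infty (fun x => 0 < logderiv g g' x).
Proof.
  intros Dg Gnz Cw Lg [X HX].
  destruct (logderiv_eventually_neg (fun x => g (- x)) (fun x => - g' (- x))) as [M HM].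
  - intros x. replace (- g' (- x)) with (scal (-1) (g' (- x)))
      by (unfold scal; simpl; unfold mult; simpl; ring).
    apply (is_derive_comp g Ropp x (g' (- x)) (-1)); [apply Dg |]. auto_derive; [exact I | ring].
  - intros x. apply Gnz.
  - intros x. apply (continuous_ext (fun y : R => - logderiv g g' (- y))).
    + intros y. symmetry. apply Rdiv_opp_l.
    + apply (continuous_opp (fun y : R => logderiv g g' (- y))).
      apply (continuous_comp Ropp); [| apply Cw].
      apply (continuous_opp (fun y : R => y)), continuous_id.
  - exact (filterlim_comp _ _ _ Ropp g _ _ _ (filterlim_Rbar_opp p_infty) Lg).
  - exists (- X). intros x Hx. apply Ropp_neq_0_compat, HX. lra.
  - exists (- M). intros x Hx. pose proof (HM (- x) ltac:(lra)) as Hw.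
    unfold logderiv in *. rewrite Ropp_involutive in Hw.
    replace (g' x / g x) with (- (- g' x / g x)) by (field; apply Gnz). lra.
Qed.

Definition decay_rate (c k : R) : R := sqrt ((c - 3 * k) / (c - k)).

Definition Q_primitive (c k t : R) : R := (c - k) / k * t - ln (1 + t) + ln (1 - t).

Definition Q_of_rate (r : R) : R := ln (1 + r) - ln (1 - r) - 2 * r / (1 - r ^ 2).

Definition Q_value (c k : R) : R := 2 * Q_of_rate (decay_rate c k).

Lemma decay_rate_bounds (c k : R) : 0 < k -> 3 * k < c -> 0 < decay_rate c k < 1.
Proof.
  intros Hk Hkc. unfold decay_rate. split.
  - apply sqrt_lt_R0, Rdiv_lt_0_compat; lra.
  - rewrite <- sqrt_1. apply sqrt_lt_1; [apply Rlt_le, Rdiv_lt_0_compat; lra | lra |].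
    apply (Rmult_lt_reg_r (c - k)); [lra |]. field_simplify; lra.
Qed.

Lemma decay_rate_sqr (c k : R) : 0 < k -> 3 * k < c -> decay_rate c k ^ 2 = (c - 3 * k) / (c - k).
Proof.
  intros Hk Hkc. unfold decay_rate. apply pow2_sqrt, Rlt_le, Rdiv_lt_0_compat; lra.
Qed.

Section SolitaryWaveProfile.

Variables (c k : R) (p p1 p2 p3 : R -> R).

Hypothesis D1 : forall x, is_derive p x (p1 x).
Hypothesis D2 : forall x, is_derive p1 x (p2 x).
Hypothesis D3 : forall x, is_derive p2 x (p3 x).
Hypothesis travelling_wave : forall x,
  - c * p1 x + c * p3 x + 3 * p x * p1 x = 2 * p1 x * p2 x + p x * p3 x.
Hypothesis p_range : forall x, 0 < p x < c.
Hypothesis k_pos : 0 < k.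
Hypothesis k_small : 3 * k < c.
Hypothesis lim_pinfty : filterlim p (Rbar_locally p_infty) (locally k).
Hypothesis lim_minfty : filterlim p (Rbar_locally m_infty) (locally k).
Hypothesis nonconstant : exists x, p x <> k.

Ltac profile_ex_derive :=
  repeat match goal with
  | |- _ /\ _ => split
  | |- True => exact I
  | |- ex_derive (fun x => p x) ?y => exact (ex_intro _ _ (D1 y))
  | |- ex_derive (fun x => p1 x) ?y => exact (ex_intro _ _ (D2 y))
  | |- ex_derive (fun x => p2 x) ?y => exact (ex_intro _ _ (D3 y))
  end.
Ltac profile_Derive y :=
  rewrite ?(is_derive_unique (fun x : R => p x) y _ (D1 y)),
    ?(is_derive_unique (fun x : R => p1 x) y _ (D2 y)),
    ?(is_derive_unique (fun x : R => p2 x) y _ (D3 y)).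

Lemma first_integrals : exists A B,
  (forall x, (c - p x) * p2 x - p1 x ^ 2 / 2 + 3 * p x ^ 2 / 2 - c * p x = A) /\
  (forall x, (c - p x) * p1 x ^ 2 - 2 * A * p x + p x ^ 3 - c * p x ^ 2 = B).
Proof.
  set (E1 := fun x => (c - p x) * p2 x - p1 x ^ 2 / 2 + 3 * p x ^ 2 / 2 - c * p x).
  assert (HA : forall x, E1 x = E1 0).
  { intros x. apply (is_derive_0_const E1). intros y. unfold E1.
    auto_derive; [profile_ex_derive | profile_Derive y].
    pose proof (travelling_wave y). lra. }
  set (E2 := fun x => (c - p x) * p1 x ^ 2 - 2 * E1 0 * p x + p x ^ 3 - c * p x ^ 2).
  exists (E1 0), (E2 0). split; [exact HA |].
  intros x. apply (is_derive_0_const E2). intros y. unfold E2.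
  auto_derive; [profile_ex_derive | profile_Derive y].
  rewrite <- (HA y). unfold E1. lra.
Qed.

(* p'^2 and then p'' are continuous functions of p, so they converge as p does; since p
   converges, their limits must vanish. *)
Lemma first_integral_constants (A B : R) :
  (forall x, (c - p x) * p2 x - p1 x ^ 2 / 2 + 3 * p x ^ 2 / 2 - c * p x = A) ->
  (forall x, (c - p x) * p1 x ^ 2 - 2 * A * p x + p x ^ 3 - c * p x ^ 2 = B) ->
  A = 3 * k ^ 2 / 2 - c * k /\ B = c * k ^ 2 - 2 * k ^ 3.
Proof.
  intros HA HB.
  set (H1 := fun y => (2 * A * y - y ^ 3 + c * y ^ 2 + B) / (c - y)).
  set (H2 := fun y => (A + H1 y / 2 - 3 * y ^ 2 / 2 + c * y) / (c - y)).
  assert (E1 : forall x, p1 x ^ 2 = H1 (p x)).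
  { intros x. pose proof (HB x). pose proof (p_range x).
    unfold H1. field_simplify_eq; lra. }
  assert (E2 : forall x, p2 x = H2 (p x)).
  { intros x. pose proof (HA x). pose proof (p_range x).
    unfold H2. rewrite <- E1. field_simplify_eq; lra. }
  assert (L1 : filterlim (fun x => p1 x ^ 2) (Rbar_locally p_infty) (locally (H1 k))).
  { apply (filterlim_ext (fun x => H1 (p x))); [intros x; symmetry; apply E1 |].
    apply (filterlim_comp _ _ _ p H1 _ (locally k)); [exact lim_pinfty |].
    apply (ex_derive_continuous (K := R_AbsRing) (V := R_NormedModule)).
    unfold H1. auto_derive. lra. }
  assert (L2 : filterlim (fun x => p2 x ^ 2) (Rbar_locally p_infty) (locally (H2 k ^ 2))).
  { apply (filterlim_ext (fun x => H2 (p x) ^ 2)); [intros x; rewrite E2; reflexivity |].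
    apply (filterlim_comp _ _ _ p (fun y => H2 y ^ 2) _ (locally k)); [exact lim_pinfty |].
    apply (ex_derive_continuous (K := R_AbsRing) (V := R_NormedModule)).
    unfold H2, H1. auto_derive. lra. }
  pose proof (derive_sqr_lim_pinfty_eq0 p p1 k _ D1 lim_pinfty L1) as Z1.
  rewrite Z1 in L1.
  pose proof (derive_sqr_lim_pinfty_eq0 p1 p2 0 _ D2 (filterlim_sqr_0 p1 L1) L2) as Z2.
  assert (Z2' : H2 k = 0) by nra.
  assert (EA : A - 3 * k ^ 2 / 2 + c * k = H2 k * (c - k)).
  { unfold H2. rewrite Z1. field. lra. }
  assert (EB : 2 * A * k - k ^ 3 + c * k ^ 2 + B = H1 k * (c - k)).
  { unfold H1. field. lra. }
  rewrite Z2' in EA. rewrite Z1 in EB.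
  split; nra.
Qed.

Lemma profile_second_order x :
  (c - p x) * p2 x - p1 x ^ 2 / 2 + 3 * p x ^ 2 / 2 - c * p x = 3 * k ^ 2 / 2 - c * k.
Proof.
  destruct first_integrals as (A & B & HA & HB).
  destruct (first_integral_constants A B HA HB) as [<- _]. apply HA.
Qed.

Lemma profile_energy x : (c - p x) * p1 x ^ 2 = (p x - k) ^ 2 * (c - 2 * k - p x).
Proof.
  destruct first_integrals as (A & B & HA & HB).
  destruct (first_integral_constants A B HA HB) as [EA EB].
  pose proof (HB x). subst A B. lra.
Qed.

Lemma is_derive_profile_shift x : is_derive (fun y => p y - k) x (p1 x).
Proof. auto_derive; [profile_ex_derive | profile_Derive x; ring]. Qed.

Lemma filterlim_profile_shift (F : (R -> Prop) -> Prop) {FF : Filter F} :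
  filterlim p F (locally k) -> filterlim (fun x => p x - k) F (locally 0).
Proof.
  intros Hl.
  assert (Hc : filterlim (fun y => y - k) (locally k) (locally (k - k))).
  { apply (ex_derive_continuous (K := R_AbsRing) (V := R_NormedModule) (fun y => y - k)).
    auto_derive. exact I. }
  rewrite Rminus_diag in Hc. exact (filterlim_comp _ _ _ p _ F _ _ Hl Hc).
Qed.

Lemma profile_neq_k x : p x <> k.
Proof.
  intros Hx. destruct nonconstant as [x0 Hx0]. apply Hx0.
  enough (p x0 - k = 0) by lra.
  apply (dominated_derive_eq0 (fun y => p y - k) p1 x); [apply is_derive_profile_shift | | lra].
  intros y. pose proof (profile_energy y). pose proof (p_range y).
  pose proof (pow2_ge_0 (p y - k)). pose proof (pow2_ge_0 (p1 y)).
  apply (Rmult_le_reg_l (c - p y)); [lra | nra].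
Qed.

Local Notation w := (logderiv (fun x => p x - k) p1).

Lemma logderiv_sqr x : w x ^ 2 = (c - 2 * k - p x) / (c - p x).
Proof.
  pose proof (profile_energy x). pose proof (p_range x). pose proof (profile_neq_k x).
  unfold logderiv. field_simplify_eq; [lra | split; lra].
Qed.

Lemma logderiv_bounds x : -1 < w x < 1.
Proof.
  pose proof (logderiv_sqr x). pose proof (p_range x).
  assert ((c - 2 * k - p x) / (c - p x) < 1).
  { apply (Rmult_lt_reg_r (c - p x)); [lra |]. field_simplify; lra. }
  split; nra.
Qed.

Lemma is_derive_logderiv x : is_derive w x (- k * (p x - k) / (c - p x) ^ 2).
Proof.
  pose proof (profile_energy x). pose proof (profile_second_order x).
  pose proof (p_range x). pose proof (profile_neq_k x).
  assert (E1 : p1 x ^ 2 = (p x - k) ^ 2 * (c - 2 * k - p x) / (c - p x))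
    by (field_simplify_eq; lra).
  assert (E2 : p2 x =
      (3 * k ^ 2 / 2 - c * k + p1 x ^ 2 / 2 - 3 * p x ^ 2 / 2 + c * p x) / (c - p x))
    by (field_simplify_eq; lra).
  unfold logderiv. auto_derive; [profile_ex_derive; lra | profile_Derive x].
  transitivity ((p2 x * (p x - k) - p1 x ^ 2) / (p x - k) ^ 2); [field; lra |].
  rewrite E2, E1. field. split; lra.
Qed.

Lemma continuous_logderiv x : continuous w x.
Proof.
  apply (ex_derive_continuous (K := R_AbsRing) (V := R_NormedModule)).
  eexists. apply is_derive_logderiv.
Qed.

Lemma abs_logderiv x : Rabs (w x) = sqrt ((c - 2 * k - p x) / (c - p x)).
Proof. rewrite <- logderiv_sqr, <- Rsqr_pow2. symmetry. apply sqrt_Rsqr_abs. Qed.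

(* Near the background state k < c - 2k the energy identity forces p' <> 0. *)
Lemma eventually_derive_neq0 (F : (R -> Prop) -> Prop) {FF : Filter F} :
  filterlim p F (locally k) -> F (fun x => p1 x <> 0).
Proof.
  intros Hl.
  eapply filter_imp; [| apply (filterlim_abs_lt p k ((c - 3 * k) / 2) Hl); lra].
  intros x Hx Hp1. apply Rabs_def2 in Hx.
  pose proof (profile_energy x) as E. rewrite Hp1 in E.
  pose proof (profile_neq_k x). pose proof (p_range x).
  assert (0 < (p x - k) ^ 2) by (rewrite <- Rsqr_pow2; apply Rsqr_pos_lt; lra).
  nra.
Qed.

Lemma filterlim_abs_logderiv (F : (R -> Prop) -> Prop) {FF : Filter F} :
  filterlim p F (locally k) -> filterlim (fun x => Rabs (w x)) F (locally (decay_rate c k)).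
Proof.
  intros Hl.
  apply (filterlim_ext (fun x => sqrt ((c - 2 * k - p x) / (c - p x))));
    [intros x; symmetry; apply abs_logderiv |].
  replace (decay_rate c k) with (sqrt ((c - 2 * k - k) / (c - k)))
    by (unfold decay_rate; do 2 f_equal; ring).
  apply (filterlim_comp _ _ _ p (fun y => sqrt ((c - 2 * k - y) / (c - y))) F (locally k) _ Hl).
  apply (continuous_comp (fun y => (c - 2 * k - y) / (c - y)) sqrt).
  - apply (ex_derive_continuous (K := R_AbsRing) (V := R_NormedModule)). auto_derive. lra.
  - apply continuous_sqrt.
Qed.

Lemma logderiv_lim_pinfty : filterlim w (Rbar_locally p_infty) (locally (- decay_rate c k)).
Proof.
  assert (Hneg : Rbar_locally p_infty (fun x => w x < 0)).
  { apply logderiv_eventually_neg.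
    - apply is_derive_profile_shift.
    - intros x. pose proof (profile_neq_k x). lra.
    - apply continuous_logderiv.
    - exact (filterlim_profile_shift _ lim_pinfty).
    - exact (eventually_derive_neq0 _ lim_pinfty). }
  apply (filterlim_ext_loc (fun x => - Rabs (w x))).
  - eapply filter_imp; [| exact Hneg]. intros x Hx.
    rewrite Rabs_left by exact Hx. apply Ropp_involutive.
  - apply (filterlim_comp _ _ _ _ Ropp _ (locally (decay_rate c k))).
    + exact (filterlim_abs_logderiv _ lim_pinfty).
    + exact (filterlim_Rbar_opp (decay_rate c k)).
Qed.

Lemma logderiv_lim_minfty : filterlim w (Rbar_locally m_infty) (locally (decay_rate c k)).
Proof.
  assert (Hpos : Rbar_locally m_infty (fun x => 0 < w x)).
  { apply logderiv_eventually_pos_minfty.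
    - apply is_derive_profile_shift.
    - intros x. pose proof (profile_neq_k x). lra.
    - apply continuous_logderiv.
    - exact (filterlim_profile_shift _ lim_minfty).
    - exact (eventually_derive_neq0 _ lim_minfty). }
  apply (filterlim_ext_loc (fun x => Rabs (w x))).
  - eapply filter_imp; [| exact Hpos]. intros x Hx. apply Rabs_right. lra.
  - exact (filterlim_abs_logderiv _ lim_minfty).
Qed.

(* With w = p'/(p - k) one has 1/(1 + w) + 1/(1 - w) = 2/(1 - w^2) = (c - p)/k. *)
Lemma is_derive_Q_primitive x :
  is_derive (fun y => Q_primitive c k (w y)) x (Q_integrand c k p x).
Proof.
  destruct (logderiv_bounds x) as [Hw1 Hw2]. pose proof (p_range x).
  assert (HG : is_derive (Q_primitive c k) (w x)
                 ((c - k) / k - (1 / (1 + w x) + 1 / (1 - w x)))).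
  { unfold Q_primitive. auto_derive; [lra | field; lra]. }
  assert (Hsum : 1 / (1 + w x) + 1 / (1 - w x) = (c - p x) / k).
  { replace (1 / (1 + w x) + 1 / (1 - w x)) with (2 / (1 - w x ^ 2))
      by (field; repeat split; nra).
    rewrite logderiv_sqr. field. lra. }
  rewrite Hsum in HG.
  replace (Q_integrand c k p x)
    with (scal (- k * (p x - k) / (c - p x) ^ 2) ((c - k) / k - (c - p x) / k)).
  - exact (is_derive_comp (Q_primitive c k) w x _ _ HG (is_derive_logderiv x)).
  - unfold Q_integrand, scal; simpl; unfold mult; simpl. field. lra.
Qed.

Lemma is_RInt_gen_Q_integrand :
  is_RInt_gen (Q_integrand c k p) (Rbar_locally m_infty) (Rbar_locally p_infty) (Q_value c k).
Proof.
  set (G := fun y => Q_primitive c k (w y)).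
  destruct (decay_rate_bounds c k k_pos k_small) as [Hr0 Hr1].
  set (r := decay_rate c k) in *.
  assert (DG : forall x, Derive G x = Q_integrand c k p x)
    by (intros x; apply is_derive_unique, is_derive_Q_primitive).
  assert (CG : forall t, -1 < t < 1 -> continuous (Q_primitive c k) t).
  { intros t Ht. apply (ex_derive_continuous (K := R_AbsRing) (V := R_NormedModule)).
    unfold Q_primitive. auto_derive. lra. }
  assert (Hval : Q_value c k = Q_primitive c k (- r) - Q_primitive c k r).
  { assert (Hck : (c - k) / k = 2 / (1 - r ^ 2)).
    { unfold r. rewrite decay_rate_sqr by assumption. field. lra. }
    unfold Q_value, Q_of_rate, Q_primitive. fold r. rewrite Hck.
    replace (1 + - r) with (1 - r) by ring. replace (1 - - r) with (1 + r) by ring.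
    field. nra. }
  rewrite Hval.
  apply (is_RInt_gen_ext (Derive G)); [apply filter_forall; intros ab x _; apply DG |].
  apply is_RInt_gen_Derive.
  - apply filter_forall. intros ab x _. eexists. apply is_derive_Q_primitive.
  - apply filter_forall. intros ab x _.
    apply (continuous_ext (Q_integrand c k p)); [intros y; symmetry; apply DG |].
    pose proof (p_range x).
    apply (ex_derive_continuous (K := R_AbsRing) (V := R_NormedModule)).
    unfold Q_integrand. auto_derive. profile_ex_derive; lra.
  - apply (filterlim_comp _ _ _ w (Q_primitive c k) _ (locally r));
      [apply logderiv_lim_minfty | apply CG; lra].
  - apply (filterlim_comp _ _ _ w (Q_primitive c k) _ (locally (- r)));
      [apply logderiv_lim_pinfty | apply CG; lra].
Qed.

End SolitaryWaveProfile.

Lemma solitary_wave_Q_value (c k : R) (phi : R -> R) :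
  0 < k -> 3 * k < c -> solitary_wave c k phi ->
  is_RInt_gen (Q_integrand c k phi) (Rbar_locally m_infty) (Rbar_locally p_infty) (Q_value c k).
Proof.
  intros Hk Hkc (Hsmooth & Htw & _ & Hlimp & Hlimm & Hrange & Hnc).
  assert (D1 : forall x, is_derive phi x (Derive phi x))
    by (intros x; exact (Derive_correct _ _ (Hsmooth 1%nat x))).
  assert (D2 : forall x, is_derive (Derive phi) x (Derive_n phi 2 x))
    by (intros x; exact (Derive_correct _ _ (Hsmooth 2%nat x))).
  assert (D3 : forall x, is_derive (Derive_n phi 2) x (Derive_n phi 3 x))
    by (intros x; exact (Derive_correct _ _ (Hsmooth 3%nat x))).
  exact (is_RInt_gen_Q_integrand c k phi _ _ _ D1 D2 D3 Htw Hrange Hk Hkc Hlimp Hlimm Hnc).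
Qed.

Lemma decay_rate_decreasing (c k1 k2 : R) :
  0 < k1 -> k1 < k2 -> 3 * k2 < c -> decay_rate c k2 < decay_rate c k1.
Proof.
  intros Hk1 Hk12 Hk2. unfold decay_rate.
  apply sqrt_lt_1; [apply Rlt_le, Rdiv_lt_0_compat; lra | apply Rlt_le, Rdiv_lt_0_compat; lra |].
  apply (Rmult_lt_reg_r ((c - k1) * (c - k2))); [nra |].
  field_simplify; [nra | lra | lra].
Qed.

Lemma Q_of_rate_decreasing (r1 r2 : R) :
  0 < r1 -> r1 < r2 -> r2 < 1 -> Q_of_rate r2 < Q_of_rate r1.
Proof.
  intros Hr1 Hr12 Hr2.
  enough (- Q_of_rate r1 < - Q_of_rate r2) by lra.
  apply (incr_function (fun r => - Q_of_rate r) 0 1 (fun t => 4 * t ^ 2 / (1 - t ^ 2) ^ 2));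
    [| | simpl; lra | exact Hr12 | simpl; lra].
  - intros t Ht0 Ht1. simpl in Ht0, Ht1. unfold Q_of_rate. auto_derive.
    + repeat split; nra.
    + field. repeat split; nra.
  - intros t Ht0 Ht1. simpl in Ht0, Ht1. apply Rdiv_lt_0_compat; [nra | apply pow_lt; nra].
Qed.

Lemma Q_value_increasing (c k1 k2 : R) :
  0 < k1 -> k1 < k2 -> 3 * k2 < c -> Q_value c k1 < Q_value c k2.
Proof.
  intros Hk1 Hk12 Hk2. unfold Q_value.
  destruct (decay_rate_bounds c k2) as [Hr2 _]; [lra | lra |].
  destruct (decay_rate_bounds c k1) as [_ Hr1]; [lra | lra |].
  pose proof (Q_of_rate_decreasing _ _ Hr2 (decay_rate_decreasing c k1 k2 Hk1 Hk12 Hk2) Hr1).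
  lra.
Qed.

Theorem lemma5p1 :
  forall (c k1 k2 : R) (phi1 phi2 : R -> R),
    0 < c -> 0 < k1 -> k1 < k2 -> k2 < c / 3 ->
    solitary_wave c k1 phi1 -> solitary_wave c k2 phi2 ->
    exists q1 q2 : R,
      is_RInt_gen (Q_integrand c k1 phi1) (Rbar_locally m_infty) (Rbar_locally p_infty) q1 /\
      is_RInt_gen (Q_integrand c k2 phi2) (Rbar_locally m_infty) (Rbar_locally p_infty) q2 /\
      q1 < q2.
Proof.
  intros c k1 k2 phi1 phi2 _ Hk1 Hk12 Hk2 S1 S2.
  exists (Q_value c k1), (Q_value c k2). split; [| split].
  - apply solitary_wave_Q_value; [lra | lra | exact S1].
  - apply solitary_wave_Q_value; [lra | lra | exact S2].
  - apply Q_value_increasing; lra.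
Qed.
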